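(* Let $\mathcal{C}$ be the code described in the context and let $1\le B'\le B$. Suppose the erasure pattern consists of a single burst, i.e. the erased positions are exactly $s,s+1,\ldots,s+B'-1$ for some $1\le s\le n-B'+1$, and there are no other erasures. Assume that either $r=0$ (i.e. $B$ divides $k$), or $r>0$ and $B'\le N+r$. Then every erased information symbol $u_i$ ($1\le i\le k$) can be decoded with maximum delay $T$, i.e. it can be recovered from $(y_1,\ldots,y_{i+\min\{T,n-i\}})$; in fact each erased $u_i$ can be recovered from the interleaved parity check $p_{N+j}$, where $j\in\{1,\ldots,B\}$ with $j\equiv i\pmod B$.
   Context: Code construction. Fix integers $T\ge 1$, $N\ge 0$, $B\ge 1$ with $N+B\le T$ and $N<T$, and a finite field $\mathbb{F}_q$ with $q\ge T$. Set $k=T-N$ and $n=T+B$. Write $k=mB+r$ with $m=\lfloor k/B\rfloor$ and $0\le r<B$. The code $\mathcal{C}\subseteq\mathbb{F}_q^n$ is the linear systematic code whose codeword for the message $\mathbf{u}=(u_1,\ldots,u_k)$ is $\mathbf{x}=(u_1,\ldots,u_k,p_1,\ldots,p_{N+B})$ (so $u_i$ is at position $i$ and $p_j$ at position $k+j$), where: (i) $p_1,\ldots,p_N$ are linear functions of $\mathbf{u}$ such that the length-$(k+N)$ code $\{(u_1,\ldots,u_k,p_1,\ldots,p_N)\}$ is a systematic MDS (e.g. Cauchy-based Reed–Solomon) $(k+N,k)$ code over $\mathbb{F}_q$; (ii) for $i=1,\ldots,B$, the interleaved parity check is $p_{N+i}=\sum_{\ell=0}^{m-1}u_{i+\ell B}+\mathbb{1}_{\{i\le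 r\}}\,u_{mB+i}$, i.e. $p_{N+i}$ is the sum of all $u_j$, $1\le j\le k$, with $j\equiv i \pmod B$. Decoding with delay. Given an erasure pattern $\boldsymbol{\varepsilon}\in\{0,1\}^n$ ($\varepsilon_j=1$ meaning $x_j$ is erased), the received word is $\mathbf{y}=(y_1,\ldots,y_n)$ with $y_j=x_j$ if $\varepsilon_j=0$ and $y_j=\star$ otherwise. A symbol $x_i$ can be recovered from $(y_1,\ldots,y_j)$ if for every two codewords $\mathbf{x},\mathbf{x}'\in\mathcal{C}$ that agree on all positions $\ell\le j$ with $\varepsilon_\ell=0$, one has $x_i=x'_i$; it is decoded with maximum delay $T$ if it can be recovered from $(y_1,\ldots,y_{i+\min\{T,n-i\}})$. *)

From HB Require Import structures.
From mathcomp Require Import all_boot all_order all_algebra.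
Set Implicit Arguments. Unset Strict Implicit. Unset Printing Implicit Defensive.
Import GRing.Theory.
Local Open Scope ring_scope.

(* Positions and message indices are 1-based natural numbers.
   A message is u : nat -> F, of which only u 1, ..., u k are used.
   The MDS parities p_1..p_N are given as linear functions of u by their
   coefficients G : p_j = \sum_{l=1}^k G j l * u l. *)

(* Codeword x = enc u, as a function of the (1-based) position;
   positions outside 1..n are set to 0 and never consulted. *)
Definition enc (F : fieldType) (T N B : nat) (G : nat -> nat -> F)
  (u : nat -> F) (pos : nat) : F :=
  let k := (T - N)%N in
  if (1 <= pos <= k)%N then u pos
  else if (pos <= k + N)%N then \sum_(1 <= l < k.+1) G (pos - k)%N l * u l
  else if (pos <= k + N + B)%N then
    \sum_(1 <= l < k.+1 | l == (pos - k - N)%N %[mod B]) u l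
  else 0.

(* The length-(k+N) systematic code {(u_1..u_k,p_1..p_N)} is MDS:
   every nonzero codeword has Hamming weight at least (k+N) - k + 1 = N+1. *)
Definition systematic_MDS (F : fieldType) (T N B : nat) (G : nat -> nat -> F) : Prop :=
  forall u : nat -> F,
    (exists2 j, (1 <= j <= (T - N) + N)%N & enc T N B G u j != 0) ->
    (N.+1 <= \sum_(1 <= j < ((T - N) + N).+1) (enc T N B G u j != 0%R : nat))%N.

Definition recoverable_from (F : fieldType) (T N B : nat) (G : nat -> nat -> F)
  (S : pred nat) (i : nat) : Prop :=
  forall u u' : nat -> F,
    (forall l, S l -> enc T N B G u l = enc T N B G u' l) ->
    enc T N B G u i = enc T N B G u' i.

Definition prefix_unerased (eps : nat -> bool) (j : nat) : pred nat :=
  fun l => (1 <= l <= j)%N && ~~ eps l.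

Definition recoverable_prefix (F : fieldType) (T N B : nat) (G : nat -> nat -> F)
  (eps : nat -> bool) (i j : nat) : Prop :=
  recoverable_from T N B G (prefix_unerased eps j) i.

(* Decoded with maximum delay T (n = T + B). *)
Definition decodable_delay (F : fieldType) (T N B : nat) (G : nat -> nat -> F)
  (eps : nat -> bool) (i : nat) : Prop :=
  recoverable_prefix T N B G eps i (i + minn T ((T + B) - i)).

(* The positions involved in the interleaved parity check p_{N+j},
   j in 1..B, j = i mod B: the position k+N+j of p_{N+j} together with
   the other information positions l /= i, l = i mod B. *)
Definition parity_support (T N B i : nat) : pred nat :=
  let k := (T - N)%N in
  let j := ((i - 1) %% B).+1 in
  fun l => (l == k + N + j)%N ||
           [&& (1 <= l <= k)%N, l == i %[mod B] & l != i].

From HB Require Import structures.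
From mathcomp Require Import all_boot all_order all_algebra.
From mathcomp Require Import zify.
Set Implicit Arguments. Unset Strict Implicit. Unset Printing Implicit Defensive.
Import GRing.Theory.
Local Open Scope ring_scope.

(* The parity p_{N+j} is the sum of the u_l with l = i mod B, so u_i is that
   parity minus the other summands; it suffices that none of these positions
   lies in the burst and all come within delay T.  Two information positions
   that are congruent mod B are at distance >= B >= B', so they cannot both be
   erased.  The parity position exceeds i by N + d, where d = k + j - i is
   positive and congruent to r mod B; hence d >= r, and d >= B when r = 0, so
   N + d >= B' in either case.  Neither the MDS property of p_1..p_N nor the
   field size is needed. *)

Definition parity_index (B i : nat) : nat := ((i - 1) %% B).+1.

Lemma parity_index_mod (B i : nat) : (0 < i)%N ->
  (parity_index B i = i %[mod B])%N.
Proof. by move=> i_gt0; rewrite /parity_index -addn1 modnDml subnK. Qed.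

Lemma parity_index_le (B i : nat) : (0 < i)%N -> (parity_index B i <= i)%N.
Proof. by move=> i_gt0; have := leq_mod (i - 1) B; rewrite /parity_index; lia. Qed.

Lemma parity_index_leB (B i : nat) : (0 < B)%N -> (parity_index B i <= B)%N.
Proof. exact: ltn_pmod. Qed.

Lemma neq_modn_dist (d m n : nat) :
  (m = n %[mod d])%N -> m != n -> (n + d <= m)%N || (m + d <= n)%N.
Proof.
wlog lt_nm : m n / (n < m)%N.
  move=> Hwlog eq_mn ne_mn; have [lt_nm | le_mn] := ltnP n m; first exact: Hwlog.
  rewrite orbC; apply: Hwlog => //; last by rewrite eq_sym.
  by rewrite ltn_neqAle ne_mn.
move=> /eqP; rewrite eqn_mod_dvd ?(ltnW lt_nm) // => /dvdn_leq d_le _.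
by rewrite -leq_subRL ?(ltnW lt_nm) ?d_le ?subn_gt0.
Qed.

Lemma parity_position_gap (k N B B' i : nat) : (0 < B)%N -> (1 <= i <= k)%N ->
  (B' <= B)%N -> (k %% B = 0 \/ B' <= N + k %% B)%N ->
  (i + B' <= k + N + parity_index B i)%N.
Proof.
move=> B_gt0 /andP[i_gt0 i_le_k] le_B'B Hr.
set d := (k + parity_index B i - i)%N.
have d_gt0 : (0 < d)%N by rewrite subn_gt0 /parity_index; lia.
have d_mod : (d = k %[mod B])%N.
  apply/eqP; rewrite -(eqn_modDr i) subnK; last by apply: leq_trans (leq_addr _ _).
  by rewrite eqn_modDl parity_index_mod.
suff : (B' <= N + d)%N by rewrite /d; lia.
case: Hr => [r0 | /leq_trans-> //]; last by rewrite leq_add2l -d_mod leq_mod.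
apply: leq_trans le_B'B (leq_trans _ (leq_addl N d)).
by apply: (dvdn_leq d_gt0); rewrite /dvdn d_mod r0.
Qed.

Lemma parity_support_unerased (T N B B' s i : nat) :
  (0 < B)%N -> (N <= T)%N -> (B' <= B)%N ->
  ((T - N) %% B = 0 \/ B' <= N + (T - N) %% B)%N ->
  (1 <= i <= T - N)%N -> (s <= i <= s + B' - 1)%N ->
  forall l, parity_support T N B i l ->
    (1 <= l <= i + minn T (T + B - i))%N && ~~ (s <= l <= s + B' - 1)%N.
Proof.
move=> B_gt0 le_NT le_B'B Hr Hi Hs l.
case/orP=> [/eqP-> | /and3P[l_info l_mod ne_li]]; last first.
  by have := neq_modn_dist (eqP l_mod) ne_li; lia.
rewrite -/(parity_index B i).
have := parity_position_gap B_gt0 Hi le_B'B Hr.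
have [i_gt0 _] := andP Hi.
have := parity_index_le B i_gt0; have := parity_index_leB i B_gt0; lia.
Qed.

Section InterleavedParity.

Variables (F : fieldType) (T N B : nat) (G : nat -> nat -> F).
Local Notation k := (T - N)%N.
Local Notation enc := (enc T N B G).

Lemma enc_info (u : nat -> F) (l : nat) : (1 <= l <= k)%N -> enc u l = u l.
Proof. by rewrite /enc => ->. Qed.

Lemma enc_interleaved (u : nat -> F) (j : nat) : (0 < j <= B)%N ->
  enc u (k + N + j) = \sum_(1 <= l < k.+1 | (l == j %[mod B])%N) u l.
Proof.
move=> /andP[j_gt0 j_le_B]; rewrite /enc.
have -> : (1 <= k + N + j <= k)%N = false by lia.
have -> : (k + N + j <= k + N)%N = false by lia.
by rewrite leq_add2l j_le_B -addnA addKn addKn.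
Qed.

Lemma recoverable_from_sub (S S' : pred nat) (i : nat) :
  (forall l, S l -> S' l) ->
  recoverable_from T N B G S i -> recoverable_from T N B G S' i.
Proof. by move=> sub_SS' recS u u' eq_uu'; apply: recS => l /sub_SS'/eq_uu'. Qed.

Lemma recoverable_parity_support (i : nat) : (0 < B)%N -> (1 <= i <= k)%N ->
  recoverable_from T N B G (parity_support T N B i) i.
Proof.
move=> B_gt0 Hi u u' eq_uu'; rewrite !enc_info //.
have [i_gt0 _] := andP Hi.
have ji := parity_index_mod B i_gt0.
have i_in : i \in index_iota 1 k.+1 by rewrite mem_index_iota ltnS.
have parity_split (v : nat -> F) : enc v (k + N + parity_index B i) =
    v i + \sum_(l <- index_iota 1 k.+1 | l != i)
            (if (l == i %[mod B])%N then v l else 0).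
  rewrite enc_interleaved ?parity_index_leB //= big_mkcond.
  by rewrite (bigD1_seq i) ?iota_uniq //= ji eqxx.
have eq_rest : \sum_(l <- index_iota 1 k.+1 | l != i)
      (if (l == i %[mod B])%N then u l else 0) =
    \sum_(l <- index_iota 1 k.+1 | l != i)
      (if (l == i %[mod B])%N then u' l else 0).
  rewrite big_seq_cond [RHS]big_seq_cond; apply: eq_bigr => l /andP[l_in ne_li].
  case: ifP => // eq_li.
  have l_info : (1 <= l <= k)%N by move: l_in; rewrite mem_index_iota ltnS.
  rewrite -(enc_info u l_info) -(enc_info u' l_info); apply: eq_uu'.
  by rewrite /parity_support l_info eq_li ne_li orbT.
have : enc u (k + N + parity_index B i) = enc u' (k + N + parity_index B i).
  by apply: eq_uu'; rewrite /parity_support eqxx.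
by rewrite !parity_split eq_rest => /addIr.
Qed.

End InterleavedParity.

Theorem mainTheorem3 (F : finFieldType) (T N B : nat) (G : nat -> nat -> F)
    (B' s : nat) :
  (1 <= T)%N -> (1 <= B)%N -> (N + B <= T)%N -> (N < T)%N ->
  (T <= #|F|)%N ->
  systematic_MDS T N B G ->
  (1 <= B' <= B)%N ->
  (1 <= s)%N -> (s <= (T + B) - B' + 1)%N ->
  ((T - N) %% B = 0)%N \/ (0 < (T - N) %% B /\ B' <= N + (T - N) %% B)%N ->
  let eps := fun l : nat => (s <= l <= s + B' - 1)%N in
  forall i : nat, (1 <= i <= T - N)%N -> eps i ->
    decodable_delay T N B G eps i /\
    (forall l, parity_support T N B i l ->
       (1 <= l <= i + minn T ((T + B) - i))%N && ~~ eps l) /\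
    recoverable_from T N B G (parity_support T N B i) i.
Proof.
move=> _ B_gt0 _ lt_NT _ _ /andP[_ le_B'B] _ _ Hr eps i Hi Hs.
have Hr' : ((T - N) %% B = 0 \/ B' <= N + (T - N) %% B)%N.
  by case: Hr => [|[_]]; [left | right].
have supp := parity_support_unerased B_gt0 (ltnW lt_NT) le_B'B Hr' Hi Hs.
have rec := recoverable_parity_support (G:=G) B_gt0 Hi.
by split; [exact: recoverable_from_sub supp rec | split].
Qed.
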